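(* Let $G$ be a graph on $[n]$ and let $e$ and $f$ be two crossing edges of $G$. Then $e$ and $f$ are crossing closed if and only if the join $e\vee f$ exists in $NC_G$. When $e$ and $f$ are crossing closed, $e\vee f$ is the bond whose edge set is $E(J(e,f))$, and $J(e,f)$ is the unique non-trivial connected component of $e\vee f$. Furthermore, $G$ is crossing closed if and only if $e\vee f$ exists in $NC_G$ for every pair of crossing edges $e,f$ of $G$.
   Context: All graphs are finite simple graphs with vertex set $[n]=\{1,\dots,n\}$; edges are written $ij$ with $i<j$. Two edges $a_1a_2$ and $b_1b_2$ cross if $a_1<b_1<a_2<b_2$ or $b_1<a_1<b_2<a_2$. A spanning subgraph is identified with its edge set. A bond of $G$ is a spanning subgraph of $G$ each of whose connected components is an induced subgraph of $G$. For a bond $H$, $\pi(H)$ is the set partition of $[n]$ whose blocks are the vertex sets of the connected components of $H$. A set partition is crossing if there are distinct blocks $B,B'$ and $a,c\in B$, $b,d\in B'$ with $a<b<c<d$, and noncrossing otherwise; a bond $H$ is noncrossing if $\pi(H)$ is noncrossing. $NC_G$ is the poset of noncrossing bonds of $G$ ordered by inclusion of edge sets. For an edge $e$, $e$ also denotes the bond with edge set $\{e\}$ (an element of $NC_G$). Two crossing edges $e,f$ are crossing closed if among all induced connected subgraphs of $G$ containing both $e$ and $f$ there is a unique one minimal with respect to containment, denoted $J(e,f)$; $G$ is crossing closed if every pair of crossing edges of $G$ is crossing closed. *)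

(* Vertices [n] are represented by 'I_n (0-indexed; the
   order is the same as on {1..n}). A simple graph is its edge set E of
   pairs (i,j) with i < j. A spanning subgraph is an edge set H. *)
From mathcomp Require Import all_boot.
Set Implicit Arguments. Unset Strict Implicit. Unset Printing Implicit Defensive.

Section Defs.
Variable n : nat.
Notation edge := ('I_n * 'I_n)%type.

Definition simple_graph (E : {set edge}) := forall p, p \in E -> (p.1 < p.2)%N.

Definition adj (H : {set edge}) : rel 'I_n :=
  fun x y => ((x, y) \in H) || ((y, x) \in H).

Definition conn (H : {set edge}) (x y : 'I_n) : bool := connect (adj H) x y.

(* H is a bond of G (edge set E): H is a spanning subgraph of G and every
   connected component of H is an induced subgraph of G *)
Definition is_bond (E H : {set edge}) :=
  H \subset E /\ forall x y : 'I_n, conn H x y -> (x, y) \in E -> (x, y) \in H.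

Definition noncrossing (H : {set edge}) :=
  forall a b c d : 'I_n, (a < b)%N -> (b < c)%N -> (c < d)%N ->
    conn H a c -> conn H b d -> conn H a b.

Definition in_NC (E H : {set edge}) := is_bond E H /\ noncrossing H.

Definition is_join (E : {set edge}) (e f : edge) (J : {set edge}) :=
  in_NC E J /\ [set e] \subset J /\ [set f] \subset J /\
  forall K, in_NC E K -> [set e] \subset K -> [set f] \subset K -> J \subset K.

Definition join_exists (E : {set edge}) (e f : edge) := exists J, is_join E e f J.

Definition crossing (e f : edge) : bool :=
  [&& (e.1 < f.1)%N, (f.1 < e.2)%N & (e.2 < f.2)%N] ||
  [&& (f.1 < e.1)%N, (e.1 < f.2)%N & (f.2 < e.2)%N].

Definition induced_edges (E : {set edge}) (S : {set 'I_n}) : {set edge} :=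
  [set p in E | (p.1 \in S) && (p.2 \in S)].

Definition induced_connected (E : {set edge}) (S : {set 'I_n}) :=
  forall x y, x \in S -> y \in S -> connect (adj (induced_edges E S)) x y.

Definition ics_containing (E : {set edge}) (e f : edge) (S : {set 'I_n}) :=
  induced_connected E S /\
  [/\ e.1 \in S, e.2 \in S, f.1 \in S & f.2 \in S].

(* G[S] is minimal w.r.t. containment among such subgraphs (an induced
   subgraph is determined by its vertex set, and containment of induced
   subgraphs is containment of vertex sets) *)
Definition minimal_ics (E : {set edge}) (e f : edge) (S : {set 'I_n}) :=
  ics_containing E e f S /\
  forall T, ics_containing E e f T -> T \subset S -> T = S.

(* e, f crossing closed: there is a unique minimal one (its vertex set is J(e,f)) *)
Definition crossing_closed_pair (E : {set edge}) (e f : edge) :=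
  exists S, minimal_ics E e f S /\ forall T, minimal_ics E e f T -> T = S.

Definition crossing_closed_graph (E : {set edge}) :=
  forall e f, e \in E -> f \in E -> crossing e f -> crossing_closed_pair E e f.

End Defs.

From mathcomp Require Import all_boot.
From Stdlib Require Import Classical.
Set Implicit Arguments. Unset Strict Implicit. Unset Printing Implicit Defensive.

(* Noncrossingness puts two crossing edges e, f of a noncrossing bond K into
   the same component of K; that component is an induced connected subgraph
   containing e and f, and conversely the edge set of any induced connected
   subgraph G[S] is a noncrossing bond.  So the noncrossing bonds above e and f
   are exactly those containing E(G[S]) for some minimal such S.  If the
   minimal S is unique, E(G[S]) is therefore the join; if a join J exists, the
   component of J through e and f lies inside every minimal S, hence equals
   each of them by minimality. *)

Section Connectivity.
Variable n : nat.
Implicit Types (E H K : {set 'I_n * 'I_n}) (S : {set 'I_n}) (x y : 'I_n).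

Definition component K x : {set 'I_n} := [set y | conn K x y].

Lemma adj_sym H : symmetric (adj H).
Proof. by move=> x y; rewrite /adj orbC. Qed.

Lemma connect_adj_sym H : connect_sym (adj H).
Proof. exact/sym_connect_sym/adj_sym. Qed.

Lemma conn_sym H x y : conn H x y = conn H y x.
Proof. exact: connect_adj_sym. Qed.

Lemma conn_edge H p : p \in H -> conn H p.1 p.2.
Proof. by move=> Hp; apply: connect1; rewrite /adj -surjective_pairing Hp. Qed.

Lemma conn_sub H K x y : H \subset K -> conn H x y -> conn K x y.
Proof.
move=> /subsetP HK; apply: connect_sub => u v /orP[] /HK Kuv;
  by apply: connect1; rewrite /adj Kuv ?orbT.
Qed.

Lemma conn_induced_mem E S x y :
  conn (induced_edges E S) x y -> x != y -> x \in S.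
Proof.
case/connectP=> [[|z p] /= + ->]; first by rewrite eqxx.
by case/andP; rewrite /adj !inE => /orP[] /and3P[_ ? ?].
Qed.

Lemma component_induced_connected E K x0 :
  K \subset E -> induced_connected E (component K x0).
Proof.
move=> /subsetP KE; set C := component K x0.
pose D := [pred u | (u \in C) && connect (adj (induced_edges E C)) x0 u].
have closedD : closed (adj K) D.
  apply: (intro_closed (@connect_adj_sym K)) => u v Kuv /andP[Cu x0u].
  have Cv : v \in C.
    by move: Cu; rewrite !inE => /connect_trans; apply; apply: connect1.
  rewrite inE /= Cv (connect_trans x0u) // connect1 //.
  by case/orP: Kuv => /KE ?; apply/orP; [left|right]; rewrite inE; apply/and3P.
have x0D y : y \in C -> connect (adj (induced_edges E C)) x0 y.
  rewrite inE => x0y; suff : y \in D by case/andP.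
  by rewrite -(closed_connect closedD x0y) inE /= inE /conn !connect0.
move=> x y /x0D x0x /x0D x0y; apply: connect_trans x0y.
by rewrite connect_adj_sym.
Qed.

End Connectivity.

Section NoncrossingBonds.
Variable n : nat.
Variable E : {set 'I_n * 'I_n}.
Implicit Types (K : {set 'I_n * 'I_n}) (S : {set 'I_n}) (e f : 'I_n * 'I_n).

Lemma induced_edges_bond S : simple_graph E -> is_bond E (induced_edges E S).
Proof.
move=> HE; split=> [|x y Sxy Exy].
  by apply/subsetP => p; rewrite inE => /andP[].
have xy : x != y by rewrite neq_ltn (HE _ Exy).
have xS := conn_induced_mem Sxy xy.
have yS : y \in S.
  by rewrite conn_sym in Sxy; apply: conn_induced_mem Sxy _; rewrite eq_sym.
by rewrite inE Exy xS yS.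
Qed.

Lemma induced_connected_noncrossing S :
  induced_connected E S -> noncrossing (induced_edges E S).
Proof.
move=> Sconn a b c d ab bc cd ac bd; apply: Sconn.
  by apply: conn_induced_mem ac _; rewrite neq_ltn (ltn_trans ab bc).
by apply: conn_induced_mem bd _; rewrite neq_ltn (ltn_trans bc cd).
Qed.

Lemma induced_connected_NC S :
  simple_graph E -> induced_connected E S -> in_NC E (induced_edges E S).
Proof.
move=> HE Sconn; split; first exact: induced_edges_bond.
exact: induced_connected_noncrossing.
Qed.

Lemma bond_induced_sub K S x0 :
  is_bond E K -> S \subset component K x0 -> induced_edges E S \subset K.
Proof.
move=> [_ Kbond] /subsetP SK; apply/subsetP => -[x y].
rewrite inE => /and3P[Exy /SK + /SK].
rewrite !inE conn_sym => x0x x0y.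
by apply: Kbond Exy; apply: connect_trans x0y.
Qed.

Lemma noncrossing_crossing_conn K e f :
  noncrossing K -> e \in K -> f \in K -> crossing e f -> conn K e.1 f.1.
Proof.
move=> Knc /conn_edge Ke /conn_edge Kf /orP[] /and3P[ab bc cd].
  exact: Knc ab bc cd Ke Kf.
by rewrite conn_sym; apply: Knc ab bc cd Kf Ke.
Qed.

Lemma component_ics K e f : K \subset E -> noncrossing K ->
  e \in K -> f \in K -> crossing e f -> ics_containing E e f (component K e.1).
Proof.
move=> KE Knc Ke Kf ef; split; first exact: component_induced_connected.
have e1f1 := noncrossing_crossing_conn Knc Ke Kf ef.
rewrite !inE; split; [exact: connect0 | exact: conn_edge | by [] |].
exact: connect_trans e1f1 (conn_edge Kf).
Qed.

Lemma minimal_ics_below e f C :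
  ics_containing E e f C -> exists2 T, minimal_ics E e f T & T \subset C.
Proof.
have [k] := ubnP #|C|; elim: k C => // k IH C ltCk Cics.
have [[T [Tics TC]]|no_smaller] :=
  classic (exists T, ics_containing E e f T /\ T \proper C).
  have [|T' T'min T'T] := IH T _ Tics; first exact: leq_trans (proper_card TC) _.
  by exists T'; last exact: subset_trans T'T (proper_sub TC).
exists C => //; split=> // T Tics TC; have [//|TnC] := eqVneq T C.
by case: no_smaller; exists T; rewrite properEneq TnC TC.
Qed.

End NoncrossingBonds.

Section Join.
Variable n : nat.
Variable E : {set 'I_n * 'I_n}.
Hypothesis HE : simple_graph E.
Implicit Types (S T : {set 'I_n}) (e f : 'I_n * 'I_n).

Lemma sub1set_induced S e :
  e \in E -> e.1 \in S -> e.2 \in S -> [set e] \subset induced_edges E S.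
Proof. by move=> Ee e1S e2S; rewrite sub1set inE Ee e1S e2S. Qed.

Lemma unique_minimal_ics_join e f S : e \in E -> f \in E -> crossing e f ->
  minimal_ics E e f S -> (forall T, minimal_ics E e f T -> T = S) ->
  is_join E e f (induced_edges E S).
Proof.
move=> Ee Ef ef [[Sconn [e1S e2S f1S f2S]] _] Suniq.
split; first exact: induced_connected_NC.
split; first exact: sub1set_induced.
split; first exact: sub1set_induced.
move=> K [Kbond Knc]; rewrite !sub1set => eK fK.
have [T Tmin TC] := minimal_ics_below (component_ics (proj1 Kbond) Knc eK fK ef).
by rewrite -(Suniq T Tmin); apply: bond_induced_sub Kbond TC.
Qed.

Lemma join_crossing_closed e f :
  crossing e f -> join_exists E e f -> crossing_closed_pair E e f.
Proof.
move=> ef [J [[Jbond Jnc] [+ [+ Jleast]]]]; rewrite !sub1set => eJ fJ.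
have /subsetP JE := proj1 Jbond.
set C := component J e.1.
have Cics : ics_containing E e f C := component_ics (proj1 Jbond) Jnc eJ fJ ef.
have minimal_eq_C T : minimal_ics E e f T -> T = C.
  move=> [[Tconn [e1T e2T f1T f2T]] Tmin]; apply/esym/Tmin => //.
  have JT : J \subset induced_edges E T.
    apply: Jleast; first exact: induced_connected_NC.
      exact: sub1set_induced (JE _ eJ) e1T e2T.
    exact: sub1set_induced (JE _ fJ) f1T f2T.
  apply/subsetP => y; rewrite inE conn_sym => /(conn_sub JT) yT.
  by have [-> //|] := eqVneq y e.1; apply: conn_induced_mem yT.
have [T Tmin _] := minimal_ics_below Cics.
by exists C; split=> //; rewrite -(minimal_eq_C T Tmin).
Qed.

Lemma crossing_closed_pairP e f : e \in E -> f \in E -> crossing e f ->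
  crossing_closed_pair E e f <-> join_exists E e f.
Proof.
move=> Ee Ef ef; split; last exact: join_crossing_closed.
move=> [S [Smin Suniq]]; exists (induced_edges E S).
exact: unique_minimal_ics_join.
Qed.

End Join.

Theorem theorem2p5 (n : nat) (E : {set 'I_n * 'I_n}) (HE : simple_graph E) :
  (forall e f, e \in E -> f \in E -> crossing e f ->
     (crossing_closed_pair E e f <-> join_exists E e f) /\
     (crossing_closed_pair E e f ->
        forall S, minimal_ics E e f S ->
          is_join E e f (induced_edges E S) /\
          (forall x y, x \in S -> y \in S -> conn (induced_edges E S) x y) /\
          (forall x y, x != y -> conn (induced_edges E S) x y -> x \in S)))
  /\
  (crossing_closed_graph E <->
     forall e f, e \in E -> f \in E -> crossing e f -> join_exists E e f).
Proof.
have ccP := crossing_closed_pairP HE.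
split=> [e f Ee Ef ef|]; last first.
  by split=> cc e f Ee Ef ef; apply/(ccP e f Ee Ef ef); apply: cc.
split; first exact: ccP.
move=> [S0 [_ S0uniq]] S Smin.
have S_S0 := S0uniq S Smin.
split; first by apply: unique_minimal_ics_join => // T /S0uniq ->.
split; first by case: Smin => -[].
by move=> x y xy /conn_induced_mem; apply.
Qed.
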